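(* If $A\in\widehat{\Omega}[0,1]$, then $x\mapsto\int_0^1A(s)\,dx(s)$ (Riemann–Stieltjes integral) defines a continuous linear functional on $CBV[0,1]$.
   Context: $CBV[0,1]$ denotes the Banach space of continuous real functions of bounded Jordan variation on $[0,1]$ with norm $\|x\|_{BV}=|x(0)|+\operatorname{var}_{[0,1]}x$. For $\varepsilon>0$ and $a<b$, a bounded $A\colon[a,b]\to\mathbb R$ belongs to $\Omega_\varepsilon[a,b]$ if there exists $\delta>0$ such that $\sup_{t\le\tau\le\sigma\le s}|A(\sigma)-A(\tau)|\le\varepsilon$ whenever $t,s\in[a,b]$ and $0\le s-t\le\delta$. $\Omega[0,1]$ is the set of bounded $A\colon[0,1]\to\mathbb R$ such that for every $\varepsilon>0$ there is $a\in(0,1)$ with $A|_{[0,a]}\in\Omega_\varepsilon[0,a]$ and $A|_{[a,1]}$ of bounded variation on $[a,1]$. $\widehat{\Omega}[0,1]=\Omega[0,1]\cup C[0,1]\cup BV[0,1]$. *)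

From HB Require Import structures.
From mathcomp Require Import all_boot all_order all_algebra.
From mathcomp Require Import all_classical all_reals all_analysis.
Set Implicit Arguments. Unset Strict Implicit. Unset Printing Implicit Defensive.
Import Order.TTheory GRing.Theory Num.Theory.
Import numFieldNormedType.Exports.
Local Open Scope classical_set_scope.
Local Open Scope ring_scope.

Section defs.
Context {R : realType}.
Implicit Types (A x : R -> R) (a b : R).

Definition bounded_on a b A := exists M : R, forall t, a <= t <= b -> `|A t| <= M.

Definition Omega_eps (eps : R) a b A :=
  bounded_on a b A /\
  exists delta : R, 0 < delta /\
    forall t s, a <= t <= b -> a <= s <= b -> 0 <= s - t <= delta ->
      forall tau sigma, t <= tau -> tau <= sigma -> sigma <= s ->
        `|A sigma - A tau| <= eps.

Definition Omega A :=
  bounded_on 0 1 A /\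
  forall eps : R, 0 < eps -> exists a : R, 0 < a < 1 /\
    Omega_eps eps 0 a A /\ bounded_variation a 1 A.

Definition Omega_hat A :=
  Omega A \/ {within `[0, 1], continuous A} \/ bounded_variation 0 1 A.

Definition CBV x := {within `[0, 1], continuous x} /\ bounded_variation 0 1 x.
Definition bv_norm x : R := `|x 0| + fine (total_variation 0 1 x).

(* Riemann--Stieltjes integral on [0,1] (limit w.r.t. the mesh).
   A partition is 0 :: s with itv_partition 0 1 s (0 = p_0 < p_1 < ... < p_n = 1);
   tags xi_i lie in [p_i, p_{i+1}]. *)
Definition pt (s : seq R) (i : nat) : R := nth 1 (0 :: s) i.
Definition mesh (s : seq R) : R := \big[Num.max/0]_(i < size s) (pt s i.+1 - pt s i).
Definition tags_ok (s xi : seq R) :=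
  size xi = size s /\ forall i, (i < size s)%N -> pt s i <= nth 0 xi i <= pt s i.+1.
Definition RS_sum A x (s xi : seq R) : R :=
  \sum_(i < size s) A (nth 0 xi i) * (x (pt s i.+1) - x (pt s i)).
Definition RS_integral_is A x (I : R) :=
  forall eps : R, 0 < eps -> exists delta : R, 0 < delta /\
    forall s xi, itv_partition 0 1 s -> tags_ok s xi -> mesh s < delta ->
      `|RS_sum A x s xi - I| < eps.

End defs.

From HB Require Import structures.
From mathcomp Require Import all_boot all_order all_algebra.
From mathcomp Require Import all_classical all_reals all_analysis.
From mathcomp Require Import ring lra.
Set Implicit Arguments. Unset Strict Implicit. Unset Printing Implicit Defensive.
Import Order.TTheory GRing.Theory Num.Theory.
Import numFieldNormedType.Exports.
Local Open Scope classical_set_scope.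
Local Open Scope ring_scope.

(* The integral is obtained from a Cauchy criterion for Riemann-Stieltjes sums.
   Walking through two fine tagged divisions at once shows that their sums
   differ by at most eps * var(x) as soon as A oscillates by at most eps over
   distances twice the mesh; this settles continuous A.  For A of bounded
   variation, summation by parts exchanges the roles of A and the continuous x.
   For A in Omega, A = (A - A (max t a)) + A (max t a) splits A into a part of
   small oscillation and a part of bounded variation.  The functional is
   linear, and |int A dz| <= sup |A| * var(z) makes it continuous for the BV
   norm. *)

Section tagged_sums.
Context {R : realType}.
Implicit Types (f g : R -> R) (c d eps : R) (ts us : seq (R * R)) (m : seq R).

(* A tagged division of [c, _] is the list of the pairs (right endpoint, tag)
   of its cells; cells may be degenerate. *)
Fixpoint stieltjes f g c ts : R :=
  if ts is (p, xi) :: ts' then f xi * (g p - g c) + stieltjes f g p ts' else 0.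

Fixpoint fine_tagged d c ts : Prop :=
  if ts is (p, xi) :: ts' then [/\ c <= xi <= p, p - c <= d & fine_tagged d p ts']
  else True.

Definition tagged_division d ts := fine_tagged d 0 ts /\ last 0 (map fst ts) = 1.

(* Unlike [fine_tagged], this survives shrinking the first cell from the left. *)
Fixpoint tags_near d c ts : Prop :=
  if ts is (p, xi) :: ts' then
    [/\ 0 <= xi <= 1, forall u, c <= u <= p -> `|xi - u| <= d & tags_near d p ts']
  else True.

Definition osc_le f d eps := forall t s, 0 <= t <= 1 -> 0 <= s <= 1 ->
  `|t - s| <= d -> `|f t - f s| <= eps.

Fixpoint variation_seq g c m : R :=
  if m is p :: m' then `|g p - g c| + variation_seq g p m' else 0.

Lemma path_le_last c m : path <=%R c m -> c <= last c m.
Proof. by elim: m c => //= p m IH c /andP[cp /IH]; apply: le_trans. Qed.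

Lemma stieltjes_const f g c ts : path <=%R c (map fst ts) ->
  last c (map fst ts) = c -> stieltjes f g c ts = 0.
Proof.
elim: ts c => [//|[p xi] ts IH] c /= /andP[cp pts] lst.
have pc : p <= c by rewrite -lst; exact: path_le_last.
have ep : p = c by apply/eqP; rewrite eq_le pc cp.
by subst p; rewrite subrr mulr0 add0r IH.
Qed.

Lemma stieltjesBl f1 f2 g c ts :
  stieltjes (f1 \- f2) g c ts = stieltjes f1 g c ts - stieltjes f2 g c ts.
Proof. by elim: ts c => [|[p xi] ts IH] c /=; [rewrite subr0 | rewrite IH; ring]. Qed.

Lemma fine_taggedW d d' c ts : d <= d' -> fine_tagged d c ts -> fine_tagged d' c ts.
Proof.
move=> dd'; elim: ts c => [//|[p xi] ts IH] c [cxp pcd /IH].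
by split=> //; exact: le_trans dd'.
Qed.

Lemma tagged_divisionW d d' ts : d <= d' -> tagged_division d ts -> tagged_division d' ts.
Proof. by move=> dd' [fts lts]; split=> //; exact: fine_taggedW fts. Qed.

Lemma fine_tagged_path d c ts : fine_tagged d c ts -> path <=%R c (map fst ts).
Proof.
elim: ts c => [//|[p xi] ts IH] c /= [/andP[cx xp] _ /IH].
by rewrite (le_trans cx xp).
Qed.

Lemma fine_tagged_near d c ts : 0 <= c -> last c (map fst ts) <= 1 ->
  fine_tagged d c ts -> tags_near d c ts.
Proof.
elim: ts c => [//|[p xi] ts IH] c /= c0 lst [/andP[cx xp] pcd fts].
have p1 : p <= 1 := le_trans (path_le_last (fine_tagged_path fts)) lst.
split.
- by rewrite (le_trans c0 cx) (le_trans xp p1).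
- by move=> u /andP[cu up]; rewrite ler_norml; apply/andP; split; lra.
- exact: IH _ (le_trans c0 (le_trans cx xp)) lst fts.
Qed.

Section merge.
Variables (f g : R -> R) (d eps : R).
Hypothesis f_osc : osc_le f (d + d) eps.

(* Consume the cell that ends first: both current tags are within d of the
   current left endpoint, so f differs by at most eps on them. *)
Lemma stieltjes_diff_merge_le n ts us c : (size ts + size us <= n)%N ->
  path <=%R c (map fst ts) -> path <=%R c (map fst us) ->
  last c (map fst ts) = last c (map fst us) ->
  tags_near d c ts -> tags_near d c us ->
  exists2 m, path <=%R c m /\ last c m = last c (map fst ts) &
    `|stieltjes f g c ts - stieltjes f g c us| <= eps * variation_seq g c m.
Proof.
have nil_diff c' us' : path <=%R c' (map fst us') -> last c' (map fst us') = c' ->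
    `|stieltjes f g c' [::] - stieltjes f g c' us'| <= eps * variation_seq g c' [::].
  by move=> pu lu; rewrite /= sub0r normrN stieltjes_const // normr0 mulr0.
elim: n ts us c => [|n IH] [|[x xi] ts] [|[y eta] us] c sz pt pu lst nt nu;
  try by exists [::]; last (rewrite distrC; apply: nil_diff).
all: try by exists [::]; last exact: nil_diff.
  by rewrite /= addSn in sz.
move: sz pt pu lst nt nu.
wlog xy : x xi ts y eta us / x <= y => [sym|].
  case: (leP x y) => [xy | /ltW yx] sz pt pu lst nt nu; first exact: sym.
  have [|m [pm lm] bm] := sym y eta us x xi ts yx _ pu pt (esym lst) nu nt.
    by rewrite addnC.
  by exists m; [rewrite lm lst | rewrite distrC].
rewrite /= addSn ltnS => sz /andP[cx pt] /andP[cy pu] lst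
  [xi01 xi_near nt] [eta01 eta_near nu].
have pu' : path <=%R x (map fst ((y, eta) :: us)) by rewrite /= xy.
have nu' : tags_near d x ((y, eta) :: us).
  by split=> // u /andP[xu uy]; apply: eta_near; rewrite uy (le_trans cx xu).
have [m [pm lm] bm] := IH ts ((y, eta) :: us) x sz pt pu' lst nt nu'.
exists (x :: m); first by rewrite /= cx.
have f_close : `|f xi - f eta| <= eps.
  apply: f_osc => //; rewrite -(subrKA c) (le_trans (ler_normD _ _)) //.
  apply: lerD; first by apply: xi_near; rewrite lexx cx.
  by rewrite distrC; apply: eta_near; rewrite lexx cy.
rewrite /= (_ : _ - _ = (f xi - f eta) * (g x - g c) +
  (stieltjes f g x ts - stieltjes f g x ((y, eta) :: us))) /=; last by ring.
rewrite [leRHS]mulrDr; apply: (le_trans (ler_normD _ _)); apply: lerD => //.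
by rewrite normrM ler_wpM2r.
Qed.

End merge.

Lemma variation_cons a b g p s :
  variation a b g (p :: s) = `|g p - g a| + variation p b g s.
Proof. by rewrite /variation /= big_nat_recl. Qed.

Lemma variation_seqE g a b m : path <=%R a m -> last a m = b ->
  exists2 s, itv_partition a b s & variation_seq g a m = variation a b g s.
Proof.
elim: m a => [|p m IH] a /=; first by move=> _ <-; exists [::]; rewrite ?variation_nil.
move=> /andP[ap pm] /(IH _ pm) [s ps ->].
have [<-|ne_pa] := eqVneq p a; first by exists s; rewrite // subrr normr0 add0r.
have lt_ap : a < p by rewrite lt_neqAle eq_sym ne_pa.
by exists (p :: s); [case: ps => ? ?; split; rewrite //= lt_ap | rewrite variation_cons].
Qed.

Lemma variation_le_total a b g s : bounded_variation a b g -> itv_partition a b s ->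
  variation a b g s <= fine (total_variation a b g).
Proof.
move=> bvg ps; have ab := itv_partition_le ps.
rewrite -lee_fin fineK; last exact/bounded_variationP.
by apply: ereal_sup_ubound; exists (variation a b g s) => //; exists s.
Qed.

Lemma variation_seq_le_total a b g m : bounded_variation a b g ->
  path <=%R a m -> last a m = b -> variation_seq g a m <= fine (total_variation a b g).
Proof. by move=> bvg pm /(variation_seqE g pm) [s ps ->]; exact: variation_le_total. Qed.

Lemma stieltjes_diff_le f g d eps ts us : osc_le f (d + d) eps -> 0 <= eps ->
  bounded_variation 0 1 g -> tagged_division d ts -> tagged_division d us ->
  `|stieltjes f g 0 ts - stieltjes f g 0 us| <= eps * fine (total_variation 0 1 g).
Proof.
move=> f_osc eps0 bvg [fts lts] [fus lus].
have near0 vs : fine_tagged d 0 vs -> last 0 (map fst vs) = 1 -> tags_near d 0 vs.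
  by move=> fvs lvs; apply: fine_tagged_near; rewrite ?lvs.
have [|m [pm lm] diff_le] := stieltjes_diff_merge_le g f_osc (leqnn _)
  (fine_tagged_path fts) (fine_tagged_path fus) _ (near0 _ fts lts) (near0 _ fus lus).
  by rewrite lts lus.
by rewrite (le_trans diff_le) // ler_wpM2l // variation_seq_le_total // lm.
Qed.

End tagged_sums.

Section tagged_cauchy.
Context {R : realType}.
Implicit Types (f g : R -> R) (c d e eps : R) (ts us : seq (R * R)).

Definition tagged_cauchy f g := forall eps, 0 < eps -> exists2 d, 0 < d &
  forall ts us, tagged_division d ts -> tagged_division d us ->
  `|stieltjes f g 0 ts - stieltjes f g 0 us| <= eps.

Definition unif_continuous01 f :=
  forall eps, 0 < eps -> exists2 d, 0 < d & osc_le f d eps.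

Lemma divDr1_mul_le e V : 0 <= e -> 0 <= V -> e / (V + 1) * V <= e.
Proof. by move=> e0 V0; rewrite mulrAC ler_pdivrMr ?ltr_wpDl // ler_wpM2l // lerDl. Qed.

Lemma unif_continuous_tagged_cauchy f g :
  unif_continuous01 f -> bounded_variation 0 1 g -> tagged_cauchy f g.
Proof.
move=> uf bvg eps eps0; set V := fine (total_variation 0 1 g).
have V0 : 0 <= V by rewrite fine_ge0 // total_variation_ge0.
have epsV0 : 0 < eps / (V + 1) := divr_gt0 eps0 (ltr_wpDl V0 ltr01).
have [d d0 f_osc] := uf _ epsV0.
exists (d / 2) => [|ts us dts dus]; first by rewrite divr_gt0.
have f_osc' : osc_le f (d / 2 + d / 2) (eps / (V + 1)) by rewrite -splitr.
apply: le_trans (stieltjes_diff_le f_osc' (ltW epsV0) bvg dts dus) _.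
by rewrite divDr1_mul_le // ltW.
Qed.

(* The division of the summation by parts: the tags become the points and the
   points become the tags. *)
Fixpoint dual_tagged c ts :=
  if ts is (p, xi) :: ts' then (xi, c) :: dual_tagged p ts' else [:: (c, c)].

Lemma stieltjes_by_parts f g c e ts :
  stieltjes f g c ts + stieltjes g f e (dual_tagged c ts) =
  f (last c (map fst ts)) * g (last c (map fst ts)) - f e * g c.
Proof.
elim: ts c e => [|[p xi] ts IH] c e /=; first ring.
by have := IH p xi; lra.
Qed.

Lemma fine_tagged_dual d c e ts : e <= c -> c - e <= d -> fine_tagged d c ts ->
  fine_tagged (d + d) e (dual_tagged c ts) /\
  last e (map fst (dual_tagged c ts)) = last c (map fst ts).
Proof.
elim: ts c e => [|[p xi] ts IH] c e /= ec ced; first by split=> //; split=> //; lra.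
move=> [/andP[cx xp] pcd fts]; have [] := IH p xi xp _ fts; first by lra.
by split=> //; split=> //; [rewrite ec | lra].
Qed.

Lemma bounded_variation_tagged_cauchy f g :
  bounded_variation 0 1 f -> unif_continuous01 g -> tagged_cauchy f g.
Proof.
move=> bvf ug eps eps0.
have [d d0 dual_cauchy] := unif_continuous_tagged_cauchy ug bvf eps0.
exists (d / 2) => [|ts us [fts lts] [fus lus]]; first by rewrite divr_gt0.
have dual_div vs : fine_tagged (d / 2) 0 vs -> last 0 (map fst vs) = 1 ->
    tagged_division d (dual_tagged 0 vs).
  move=> fvs lvs; have [] := fine_tagged_dual (lexx 0) _ fvs.
    by rewrite subrr divr_ge0 ?ltW.
  by rewrite -splitr lvs.
have := stieltjes_by_parts f g 0 0 ts; have := stieltjes_by_parts f g 0 0 us.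
rewrite lts lus => byp_us byp_ts.
rewrite (_ : _ - _ = stieltjes g f 0 (dual_tagged 0 us) -
                     stieltjes g f 0 (dual_tagged 0 ts)); last by lra.
by apply: dual_cauchy; apply: dual_div.
Qed.

Lemma bounded_variation_eq_in a b f g : {in `[a, b], f =1 g} ->
  bounded_variation a b f -> bounded_variation a b g.
Proof.
move=> fg [M bvM]; exists M => _ [s ps <-]; apply: bvM; exists s => //.
apply: eq_big_nat => n /andP[_ ns] /=; have ab := itv_partition_le ps.
have inab k : (k <= size s)%N -> nth b (a :: s) k \in `[a, b].
  by move=> ks; rewrite in_itv /= itv_partition_nth_ge ?itv_partition_nth_le.
by congr (`|_ - _|); apply: fg; [exact: (inab n.+1) | exact/inab/ltnW].
Qed.

Lemma bounded_variation_max a f : 0 <= a -> a <= 1 -> bounded_variation a 1 f ->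
  bounded_variation 0 1 (fun t => f (Num.max t a)).
Proof.
move=> a0 a1 bvf; apply/bounded_variationP => //.
rewrite (total_variationD _ a0 a1) fin_numD.
apply/andP; split; apply/bounded_variationP => //.
- apply: (@bounded_variation_eq_in _ _ (cst (f a))).
    by move=> t; rewrite in_itv /= => /andP[_ ta]; rewrite max_r.
  by apply: nondecreasing_bounded_variation => ? ? _ _ _.
- apply: bounded_variation_eq_in bvf => t.
  by rewrite in_itv /= => /andP[ta _]; rewrite max_l.
Qed.

Lemma Omega_eps_osc_le eps a A : 0 <= a -> Omega_eps eps 0 a A ->
  exists2 delta, 0 < delta & osc_le (fun t => A t - A (Num.max t a)) delta eps.
Proof.
move=> a0 [_ [delta [delta0 oscA]]]; exists delta => // t s t01 s01.
wlog ts : t s t01 s01 / t <= s => [sym|].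
  case: (leP t s) => [|/ltW st]; first exact: sym.
  by move=> dts; rewrite distrC; apply: sym => //; rewrite distrC.
rewrite distrC ger0_norm ?subr_ge0 // => std; have /andP[t0 _] := t01.
have oscA' u v : 0 <= u -> u <= v -> v <= a -> v - u <= delta -> `|A v - A u| <= eps.
  move=> u0 uv va vud; apply: (oscA u v _ _ _ u v (lexx u) uv (lexx v)).
  - by rewrite u0 (le_trans uv va).
  - by rewrite (le_trans u0 uv) va.
  - by rewrite subr_ge0 uv.
have [sa|lt_as] := leP s a.
  by rewrite max_r ?(le_trans ts) // opprB addrA subrK distrC oscA'.
have [ta|lt_at] := leP t a.
  by rewrite subrr subr0 distrC oscA' //; lra.
rewrite !subrr normr0; apply: le_trans (oscA' 0 0 (lexx 0) (lexx 0) a0 _).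
  by rewrite subrr normr0.
by rewrite subrr ltW.
Qed.

Lemma Omega_tagged_cauchy A g : Omega A -> bounded_variation 0 1 g ->
  unif_continuous01 g -> tagged_cauchy A g.
Proof.
move=> [_ OmA] bvg ug eps eps0; set V := fine (total_variation 0 1 g).
have V0 : 0 <= V by rewrite fine_ge0 // total_variation_ge0.
have eps20 : 0 < eps / 2 by rewrite divr_gt0.
have epsV0 : 0 < eps / 2 / (V + 1) := divr_gt0 eps20 (ltr_wpDl V0 ltr01).
have [a [/andP[a0 a1] [Oa bvA]]] := OmA _ epsV0.
have [delta delta0 oscA] := Omega_eps_osc_le (ltW a0) Oa.
set A2 := fun t => A (Num.max t a).
have [d d0 cauchyA2] := bounded_variation_tagged_cauchy
  (bounded_variation_max (ltW a0) (ltW a1) bvA) ug eps20.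
exists (Num.min d (delta / 2)) => [|ts us dts dus]; first by rewrite lt_min d0 divr_gt0.
have [dd ddelta] : Num.min d (delta / 2) <= d /\ Num.min d (delta / 2) <= delta / 2.
  by rewrite !ge_min !lexx ?orbT.
have splitA vs : stieltjes A g 0 vs = stieltjes (A \- A2) g 0 vs + stieltjes A2 g 0 vs.
  by rewrite stieltjesBl subrK.
rewrite !splitA opprD addrACA (splitr eps); apply: (le_trans (ler_normD _ _)).
apply: lerD; last by apply: cauchyA2; apply: tagged_divisionW dd _.
have oscA' : osc_le (A \- A2) (delta / 2 + delta / 2) (eps / 2 / (V + 1)).
  by rewrite -splitr.
apply: le_trans (stieltjes_diff_le oscA' (ltW epsV0) bvg
  (tagged_divisionW ddelta dts) (tagged_divisionW ddelta dus)) _.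
by rewrite divDr1_mul_le // ltW.
Qed.

End tagged_cauchy.

Section riemann_stieltjes.
Context {R : realType}.
Implicit Types (f g A x : R -> R) (d eps : R) (s xi : seq R).

Lemma within01_continuous_ball f t eps : {within `[0, 1], continuous f} ->
  0 <= t <= 1 -> 0 < eps ->
  exists2 r, 0 < r & forall u, 0 <= u <= 1 -> `|t - u| < r -> `|f t - f u| < eps.
Proof.
move=> /subspace_continuousP cf t01 eps0.
have /cvgrPdist_lt /(_ eps eps0) := cf t (t01 : `[0, 1]%classic t).
rewrite near_withinE => /nbhs_ballP [r /= r0 near_t].
by exists r => // u u01 tu; apply: near_t; rewrite /= ?in_itv.
Qed.

(* Heine-Cantor through the near-covering form of compactness: a modulus valid
   for all (v, d) near (t, 0+), for every t in [0, 1], is valid for some d > 0. *)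
Lemma continuous_unif_continuous01 f :
  {within `[0, 1], continuous f} -> unif_continuous01 f.
Proof.
move=> cf eps eps0.
have /compact_near_coveringP/near_covering_withinP := @segment_compact R 0 1.
move=> /(_ R (at_right 0) (fun d t => forall u, `[0, 1]%classic u -> `|t - u| <= d ->
  `|f t - f u| <= eps)) [t t01|d d0 osc].
  have eps20 : 0 < eps / 2 by rewrite divr_gt0.
  have [r r0 near_t] := within01_continuous_ball cf t01 eps20.
  exists (ball t (r / 2), [set d | d < r / 2]).
    by split; [apply: nbhsx_ballx | apply: nbhs_right_lt]; rewrite divr_gt0.
  move=> [v d] [tv dr] + u + vu; rewrite /= !in_itv /= => v01 u01.
  move: tv dr vu; rewrite /ball /= => tv dr vu.
  have tu : `|t - u| < r.
    by rewrite -(subrKA v) (le_lt_trans (ler_normD _ _)) //; lra.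
  rewrite -(subrKA (f t)) (le_trans (ler_normD _ _)) // (splitr eps) distrC.
  by apply: lerD; apply: ltW; apply: near_t => //; lra.
exists (d / 2) => [|t u t01 u01 tu]; first by rewrite divr_gt0.
apply: (osc (d / 2)) => //; rewrite ?divr_gt0 //=.
by rewrite sub0r normrN gtr0_norm ?divr_gt0 // ltr_pdivrMr // ltr_pMr // ltr1n.
Qed.

Lemma stieltjes_zip f g c s xi : size xi = size s -> stieltjes f g c (zip s xi) =
  \sum_(i < size s) f (nth 0 xi i) * (g (nth 1 (c :: s) i.+1) - g (nth 1 (c :: s) i)).
Proof.
elim: s c xi => [|p s IH] c [|z xi] //= => [_|[sz]]; first by rewrite big_ord0.
by rewrite big_ord_recl /= (IH p).
Qed.

Lemma fine_tagged_zip d c s xi : size xi = size s ->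
  (forall i, (i < size s)%N -> nth 1 (c :: s) i <= nth 0 xi i <= nth 1 (c :: s) i.+1 /\
    nth 1 (c :: s) i.+1 - nth 1 (c :: s) i <= d) ->
  fine_tagged d c (zip s xi).
Proof.
elim: s c xi => [|p s IH] c [|z xi] //= [sz] tg.
by have [? ?] := tg 0%N isT; split => //; apply: IH => // i; exact: (tg i.+1).
Qed.

Lemma tagged_division_zip d s xi : itv_partition 0 1 s -> tags_ok s xi -> mesh s <= d ->
  tagged_division d (zip s xi).
Proof.
move=> [_ /eqP s1] [sz tg] md; split; last by rewrite -/(unzip1 _) unzip1_zip ?sz.
apply: fine_tagged_zip => // i si; split; first exact: tg.
apply: le_trans md.
exact: (le_bigmax 0 (fun j : 'I_(size s) => pt s j.+1 - pt s j) (Ordinal si)).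
Qed.

Lemma RS_sum_stieltjes A x s xi : size xi = size s ->
  RS_sum A x s xi = stieltjes A x 0 (zip s xi).
Proof. by move=> sz; rewrite stieltjes_zip. Qed.

Definition unif_part n : seq R := [seq k%:R / n.+1%:R | k <- iota 1 n.+1].
Definition unif_tags n : seq R := [seq k%:R / n.+1%:R | k <- iota 0 n.+1].

Lemma unif_partP n : [/\ itv_partition 0 1 (unif_part n),
  tags_ok (unif_part n) (unif_tags n) & mesh (unif_part n) <= n.+1%:R^-1].
Proof.
set F := fun k : nat => k%:R / n.+1%:R : R.
have F_lt : {homo F : i j / (i < j)%N >-> i < j}.
  by move=> i j ij; rewrite ltr_pM2r ?invr_gt0 ?ltr0n // ltr_nat.
have ptE i : (i <= n.+1)%N -> pt (unif_part n) i = F i.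
  case: i => [|i] lei; first by rewrite /F mul0r.
  by rewrite /pt /= (nth_map 0%N) ?size_iota // nth_iota // add1n.
have sz : size (unif_part n) = n.+1 by rewrite size_map size_iota.
split; first split.
- have /= := @homo_sorted _ _ F _ _ F_lt _ (iota_ltn_sorted 0 n.+2).
  by rewrite /F mul0r.
- by apply/eqP; rewrite (last_nth 1) sz -/(pt _ n.+1) ptE // /F divff.
- split; first by rewrite !size_map !size_iota.
  move=> i; rewrite sz => ltin; rewrite (ptE i.+1 ltin) (ptE i (ltnW ltin)).
  by rewrite (nth_map 0%N) ?size_iota // nth_iota // add0n lexx ltW ?F_lt.
- rewrite /mesh sz; apply: bigmax_le => [|i _]; first by rewrite invr_ge0 ler0n.
  by rewrite (ptE i.+1) // (ptE i) 1?ltnW // /F -mulrBl -natrB // subSnn mul1r.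
Qed.

Lemma mesh_unif_part_lt d n : 0 < d -> (Num.truncn d^-1 <= n)%N ->
  mesh (unif_part n) < d.
Proof.
move=> d0 dn; have [_ _ mesh_le] := unif_partP n; apply: le_lt_trans mesh_le _.
rewrite -[ltRHS]invrK ltf_pV2 ?posrE ?invr_gt0 ?ltr0n //.
by rewrite (lt_le_trans (truncnS_gt _)) // ler_nat ltnS.
Qed.

Lemma RS_sum_cauchy A x : tagged_cauchy A x -> forall eps, 0 < eps -> exists2 d, 0 < d &
  forall s xi s' xi', itv_partition 0 1 s -> tags_ok s xi -> mesh s < d ->
    itv_partition 0 1 s' -> tags_ok s' xi' -> mesh s' < d ->
    `|RS_sum A x s xi - RS_sum A x s' xi'| <= eps.
Proof.
move=> cauchy eps eps0; have [d d0 cauchy_d] := cauchy eps eps0.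
exists d => // s xi s' xi' ps txi /ltW md ps' txi' /ltW md'.
rewrite !RS_sum_stieltjes; [|by case: txi'|by case: txi].
by apply: cauchy_d; apply: tagged_division_zip.
Qed.

Lemma RS_integral_exists A x : tagged_cauchy A x -> exists I, RS_integral_is A x I.
Proof.
move=> /RS_sum_cauchy cauchy.
pose u n := RS_sum A x (unif_part n) (unif_tags n).
have u_near eps : 0 < eps -> exists2 d, 0 < d & forall n s xi, (Num.truncn d^-1 <= n)%N ->
    itv_partition 0 1 s -> tags_ok s xi -> mesh s < d -> `|u n - RS_sum A x s xi| <= eps.
  move=> eps0; have [d d0 cauchy_d] := cauchy eps eps0; exists d => // n s xi dn.
  by have [? ? _] := unif_partP n; apply: cauchy_d => //; exact: mesh_unif_part_lt.
have half_lt eps : 0 < eps -> eps / 2 < eps.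
  by move=> eps0; rewrite ltr_pdivrMr // ltr_pMr // ltr1n.
have u_cvg : cvg (u @ \oo).
  apply/cauchy_cvgP/cauchy_exP => eps eps0.
  have [d d0 u_d] := u_near (eps / 2) (divr_gt0 eps0 (ltr0Sn _ 1)).
  exists (u (Num.truncn d^-1)), (Num.truncn d^-1) => // n /= dn.
  have [? ? _] := unif_partP n.
  rewrite /ball /= (le_lt_trans (u_d _ _ _ (leqnn _) _ _ (mesh_unif_part_lt _ dn))) //.
  exact: half_lt.
exists (lim (u @ \oo)) => eps eps0; have eps20 : 0 < eps / 2 by rewrite divr_gt0.
have [d d0 u_d] := u_near _ eps20; exists d; split => // s xi ps txi md.
have /cvgrPdist_lt /(_ _ eps20) [M _ u_lim] := u_cvg.
set n := maxn (Num.truncn d^-1) M.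
rewrite -(subrKA (u n)) (le_lt_trans (ler_normD _ _)) // (splitr eps) distrC.
rewrite [X in _ + X]distrC; apply: ler_ltD; first exact: u_d (leq_maxl _ _) ps txi md.
exact: u_lim (leq_maxr _ _).
Qed.

Lemma RS_integral_is_unique A x I J :
  RS_integral_is A x I -> RS_integral_is A x J -> I = J.
Proof.
move=> AxI AxJ; apply/eqP; rewrite -subr_eq0 -normr_le0; apply/ler_addgt0Pr => e e0.
have e20 : 0 < e / 2 by rewrite divr_gt0.
have [d [d0 I_d]] := AxI _ e20; have [d' [d'0 J_d']] := AxJ _ e20.
have dd'0 : 0 < Num.min d d' by rewrite lt_min d0 d'0.
set n := Num.truncn (Num.min d d')^-1; have [ps txi _] := unif_partP n.
have := mesh_unif_part_lt dd'0 (leqnn n); rewrite lt_min => /andP[md md'].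
rewrite add0r -(subrKA (RS_sum A x (unif_part n) (unif_tags n))) (splitr e).
apply: le_trans (ler_normD _ _) _; rewrite distrC.
by apply: lerD; apply: ltW; [exact: I_d | exact: J_d'].
Qed.

(* The value 0 is junk when [A] is not integrable against [x]. *)
Definition RS_integral A x : R := xget 0 [set I | RS_integral_is A x I].

Lemma RS_integralE A x I : RS_integral_is A x I -> RS_integral A x = I.
Proof. by move=> AxI; apply: xget_unique => // J /RS_integral_is_unique; apply. Qed.

Lemma RS_integral_isD A x y I J : RS_integral_is A x I -> RS_integral_is A y J ->
  RS_integral_is A (x \+ y) (I + J).
Proof.
move=> AxI AyJ eps eps0; have eps20 : 0 < eps / 2 by rewrite divr_gt0.
have [d [d0 I_d]] := AxI _ eps20; have [d' [d'0 J_d']] := AyJ _ eps20.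
exists (Num.min d d'); split => [|s xi ps txi]; first by rewrite lt_min d0 d'0.
rewrite lt_min => /andP[md md'].
have -> : RS_sum A (x \+ y) s xi = RS_sum A x s xi + RS_sum A y s xi.
  by rewrite /RS_sum -big_split; apply: eq_bigr => i _ /=; ring.
rewrite opprD addrACA (splitr eps) (le_lt_trans (ler_normD _ _)) //.
by rewrite ltrD ?I_d ?J_d'.
Qed.

Lemma RS_integral_isZ A x c I : RS_integral_is A x I ->
  RS_integral_is A (fun t => c * x t) (c * I).
Proof.
move=> AxI eps eps0; have c10 : 0 < `|c| + 1 by rewrite ltr_wpDl.
have [d [d0 I_d]] := AxI _ (divr_gt0 eps0 c10); exists d; split => // s xi ps txi md.
have -> : RS_sum A (fun t => c * x t) s xi = c * RS_sum A x s xi.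
  by rewrite /RS_sum mulr_sumr; apply: eq_bigr => i _; ring.
rewrite -mulrBr normrM (le_lt_trans (ler_wpM2l _ (ltW (I_d _ _ ps txi md)))) //.
by rewrite mulrA ltr_pdivrMr // mulrDr mulr1 mulrC ltrDl.
Qed.

Lemma RS_integral_isB A x y I J : RS_integral_is A x I -> RS_integral_is A y J ->
  RS_integral_is A (x \- y) (I - J).
Proof.
move=> AxI /(RS_integral_isZ (-1)) AyJ.
have -> : x \- y = x \+ (fun t => -1 * y t) by apply/funext => t /=; rewrite mulN1r.
have -> : I - J = I + -1 * J by rewrite mulN1r.
exact: RS_integral_isD AxI AyJ.
Qed.

Lemma RS_sum_le_variation A z M s xi : (forall t, 0 <= t <= 1 -> `|A t| <= M) ->
  itv_partition 0 1 s -> tags_ok s xi -> `|RS_sum A z s xi| <= M * variation 0 1 z s.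
Proof.
move=> AM ps [sz txi]; rewrite /variation big_mkord mulr_sumr.
apply: le_trans (ler_norm_sum _ _ _) _; apply: ler_sum => i _.
rewrite normrM ler_wpM2r //= AM //; have /andP[lo hi] := txi i (ltn_ord i).
rewrite (le_trans _ lo) ?(le_trans hi) //.
  by apply: (itv_partition_nth_le (m := i.+1)) ps; rewrite ltnS.
exact: itv_partition_nth_ge (leqW (ltn_ord i)) ps.
Qed.

Lemma RS_integral_is_le A z M I : (forall t, 0 <= t <= 1 -> `|A t| <= M) ->
  bounded_variation 0 1 z -> RS_integral_is A z I ->
  `|I| <= M * fine (total_variation 0 1 z).
Proof.
move=> AM bvz AzI; apply/ler_addgt0Pr => e e0.
have M0 : 0 <= M by rewrite (le_trans _ (AM 0 _)) ?lexx ?ler01.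
have [d [d0 I_d]] := AzI e e0.
set n := Num.truncn d^-1; have [ps txi _] := unif_partP n.
rewrite -(subrK (RS_sum A z (unif_part n) (unif_tags n)) I).
apply: le_trans (ler_normD _ _) _; rewrite addrC distrC; apply: lerD.
  rewrite (le_trans (RS_sum_le_variation _ AM ps txi)) //.
  by rewrite ler_wpM2l // variation_le_total.
exact/ltW/I_d/mesh_unif_part_lt.
Qed.

Lemma continuous_bounded_on A : {within `[0, 1], continuous A} -> bounded_on 0 1 A.
Proof.
move=> cA.
have [M [_ AM]] := compact_bounded (continuous_compact cA (@segment_compact R 0 1)).
by exists (M + 1) => t t01; apply: (AM (M + 1)); [rewrite ltrDl | exists t].
Qed.

Lemma bounded_variation_bounded_on A : bounded_variation 0 1 A -> bounded_on 0 1 A.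
Proof.
move=> bvA; exists (`|A 0| + fine (total_variation 0 1 A)) => t /andP[t0 t1].
rewrite -(subrK (A 0) (A t)) (le_trans (ler_normD _ _)) // addrC lerD2l.
rewrite -lee_fin fineK; last exact/bounded_variationP.
rewrite (le_trans (total_variation_ge _ t0)) // (total_variationD _ t0 t1).
by rewrite leeDl // total_variation_ge0.
Qed.

Lemma Omega_hat_bounded_on A : Omega_hat A -> bounded_on 0 1 A.
Proof.
case=> [[]|[]] //; [exact: continuous_bounded_on | exact: bounded_variation_bounded_on].
Qed.

Lemma RS_integral_is_small A M eps : (forall t, 0 <= t <= 1 -> `|A t| <= M) -> 0 < eps ->
  exists2 delta, 0 < delta & forall z I, bounded_variation 0 1 z ->
    RS_integral_is A z I -> bv_norm z < delta -> `|I| < eps.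
Proof.
move=> AM eps0; have M0 : 0 <= M by rewrite (le_trans _ (AM 0 _)) ?lexx ?ler01.
exists (eps / (M + 1)) => [|z I bvz AzI zeps]; first by rewrite divr_gt0 // ltr_wpDl.
have TV_le : fine (total_variation 0 1 z) <= bv_norm z by rewrite lerDr.
have bv0 : 0 <= bv_norm z by rewrite addr_ge0 ?fine_ge0 ?total_variation_ge0.
apply: le_lt_trans (RS_integral_is_le AM bvz AzI) _.
rewrite (le_lt_trans (ler_wpM2l M0 TV_le)) //.
rewrite (le_lt_trans (ler_wpM2r bv0 (ler_wpDr ler01 (lexx M)))) //.
by rewrite mulrC -ltr_pdivlMr // ltr_wpDl.
Qed.

Lemma Omega_hat_RS_integral A x : Omega_hat A -> CBV x ->
  RS_integral_is A x (RS_integral A x).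
Proof.
move=> hA [cx bvx]; have [I AxI] : exists I, RS_integral_is A x I.
  apply: RS_integral_exists; have ux := continuous_unif_continuous01 cx.
  case: hA => [OA | [cA | bvA]].
  - exact: Omega_tagged_cauchy.
  - exact: unif_continuous_tagged_cauchy (continuous_unif_continuous01 cA) bvx.
  - exact: bounded_variation_tagged_cauchy.
by rewrite (RS_integralE AxI).
Qed.

End riemann_stieltjes.

Unset Implicit Arguments.

Theorem corollary4p13 (R : realType) (A : R -> R) :
  Omega_hat A ->
  exists L : (R -> R) -> R,
    (forall x, CBV x -> RS_integral_is A x (L x)) /\
    (forall x y, CBV x -> CBV y -> L (x \+ y) = L x + L y) /\
    (forall (c : R) x, CBV x -> L (fun t => c * x t) = c * L x) /\
    (forall x, CBV x -> forall eps : R, 0 < eps -> exists delta : R, 0 < delta /\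
       forall y, CBV y -> bv_norm (y \- x) < delta -> `|L y - L x| < eps).
Proof.
move=> hA; have AxL := Omega_hat_RS_integral hA.
exists (RS_integral A); split; first exact: AxL.
split=> [x y cx cy|]; first exact: RS_integralE (RS_integral_isD (AxL x cx) (AxL y cy)).
split=> [c x cx|x cx eps eps0]; first exact: RS_integralE (RS_integral_isZ c (AxL x cx)).
have [M A_le_M] := Omega_hat_bounded_on hA.
have [delta delta0 small] := RS_integral_is_small A_le_M eps0.
exists delta; split=> // y cy; apply: small (RS_integral_isB (AxL y cy) (AxL x cx)).
by apply: bounded_variationD; [exact: ltr01 | case: cy | apply/bounded_variationN; case: cx].
Qed.
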